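(* Consider an MLP with a single hidden layer of width $d_h\ge 2$, input dimension $d_i$ and output dimension $d_o$, with weight space $\mathcal{W}=\mathbb{R}^{d_h\times d_i}\oplus\mathbb{R}^{d_h}\oplus\mathbb{R}^{d_o\times d_h}\oplus\mathbb{R}^{d_o}$ (weights $\boldsymbol{\omega}=(\mathbf{W}_1,\mathbf{b}_1,\mathbf{W}_2,\mathbf{b}_2)$) equipped with the Euclidean norm, and let $G=S_{d_h}$ act on $\mathcal{W}$ by $\tau\cdot(\mathbf{W}_1,\mathbf{b}_1,\mathbf{W}_2,\mathbf{b}_2)=(\mathbf{P}_\tau^\top\mathbf{W}_1,\mathbf{P}_\tau^\top\mathbf{b}_1,\mathbf{W}_2\mathbf{P}_\tau,\mathbf{b}_2)$, where $\mathbf{P}_\tau$ is the permutation matrix of $\tau$. Then for every $\boldsymbol{\omega}\in\mathcal{W}$ there exists a non-identity $g\in G$ such that $$\lVert\boldsymbol{\omega}-g\cdot\boldsymbol{\omega}\rVert_2=\mathcal{O}\!\left(\frac{d_i+d_o}{\log(d_h)}\lVert\boldsymbol{\omega}\rVert_2\right),$$ where the implied constant is independent of $\boldsymbol{\omega}$, $d_i$, $d_o$, $d_h$. *)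

From Stdlib Require Import Reals.
From HB Require Import structures.
From mathcomp Require Import all_boot all_order all_algebra all_fingroup.
From mathcomp Require Import reals exp Rstruct.
Set Implicit Arguments. Unset Strict Implicit. Unset Printing Implicit Defensive.
Import Order.TTheory GRing.Theory Num.Theory.
Local Open Scope ring_scope.

Definition weights (di dh do : nat) : Type :=
  ('M[R]_(dh, di) * 'cV[R]_dh * 'M[R]_(do, dh) * 'cV[R]_do)%type.

Definition sqnorm_mx (m n : nat) (A : 'M[R]_(m, n)) : R :=
  \sum_(i < m) \sum_(j < n) A i j ^+ 2.

Definition wnorm (di dh do : nat) (w : weights di dh do) : R :=
  let: (W1, b1, W2, b2) := w in
  Num.sqrt (sqnorm_mx W1 + sqnorm_mx b1 + sqnorm_mx W2 + sqnorm_mx b2).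

Definition wsub (di dh do : nat) (w v : weights di dh do) : weights di dh do :=
  let: (W1, b1, W2, b2) := w in
  let: (V1, c1, V2, c2) := v in
  (W1 - V1, b1 - c1, W2 - V2, b2 - c2).

Definition wact (di dh do : nat) (tau : 'S_dh) (w : weights di dh do)
  : weights di dh do :=
  let: (W1, b1, W2, b2) := w in
  ((perm_mx tau)^T *m W1, (perm_mx tau)^T *m b1, W2 *m perm_mx tau, b2).

From Stdlib Require Import Reals.
From HB Require Import structures.
From mathcomp Require Import all_boot all_order all_algebra all_fingroup.
From mathcomp Require Import reals exp Rstruct.
From mathcomp Require Import ring lra.
Set Implicit Arguments. Unset Strict Implicit. Unset Printing Implicit Defensive.
Import Order.TTheory GRing.Theory Num.Theory.
Local Open Scope ring_scope.

(* Let E_k be the energy of hidden neuron k: the squared norm of its incoming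
   weights, its bias and its outgoing weights.  Swapping neurons i and j moves
   only their weights, so it displaces w by at most 2 sqrt (E_i + E_j).  The
   energies sum to at most |w|^2, hence the two least energetic neurons have
   E_i + E_j <= 2 |w|^2 / (d_h - 1) and the displacement is O(|w| / sqrt d_h).
   This is O(|w| / log d_h) because log d <= 2 sqrt d; the factor d_i + d_o >= 2
   only weakens the bound. *)

Section RealDomain.
Variable K : realDomainType.

Lemma sum_sqr_sub_tperm n (g : 'I_n -> K) (i j : 'I_n) :
  \sum_k (g k - g (tperm i j k)) ^+ 2 = (g i - g j) ^+ 2 *+ 2.
Proof.
have [->|nij] := eqVneq i j.
  by rewrite subrr expr0n mul0rn big1 // => k _; rewrite tperm1 perm1 subrr expr0n.
rewrite (bigD1 i) // (bigD1 j) 1?eq_sym //= big1 => [|k /andP[ki kj]].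
  by rewrite addr0 tpermL tpermR mulr2n -[(g j - g i) ^+ 2]sqrrN opprB.
by rewrite tpermD 1?eq_sym // subrr expr0n.
Qed.

Lemma sqrrB_mulr2n_le (a b : K) : (a - b) ^+ 2 *+ 2 <= 4 * (a ^+ 2 + b ^+ 2).
Proof.
rewrite -subr_ge0.
have -> : 4 * (a ^+ 2 + b ^+ 2) - (a - b) ^+ 2 *+ 2 = 2 * (a + b) ^+ 2 by ring.
by rewrite mulr_ge0 // sqr_ge0.
Qed.

(* F i <= F k and F j <= F k for each of the n.+1 indices k != i. *)
Lemma exists_pair_sum_le n (F : 'I_n.+2 -> K) : (forall k, 0 <= F k) ->
  exists i j, i != j /\ n.+1%:R * (F i + F j) <= 2 * \sum_k F k.
Proof.
move=> F_ge0.
pose i := [arg min_(k < ord0) F k]%O.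
have minFi k : F i <= F k by rewrite /i; case: arg_minP => // ? _; apply.
have j0_neq_i : lift i ord0 != i by rewrite eq_sym neq_lift.
pose j := [arg min_(k < lift i ord0 | k != i) F k]%O.
have [ji minFj] : j != i /\ forall k, k != i -> F j <= F k.
  by rewrite /j; case: arg_minP.
exists i, j; split; first by rewrite eq_sym.
have -> : n.+1%:R * (F i + F j) = \sum_(k | k != i) (F i + F j).
  by rewrite sumr_const cardC1 card_ord mulr_natl.
rewrite [X in _ <= 2 * X](bigD1 i) //= mulrDr big_distrr /=.
apply: ler_wpDl; first by rewrite mulr_ge0.
by apply: ler_sum => k /minFj Fjk; rewrite mulr_natl mulr2n lerD.
Qed.

End RealDomain.

Lemma ln_sqr_le (K : realType) (x : K) : 1 <= x -> ln x ^+ 2 <= 4 * x.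
Proof.
move=> x_ge1; have x_gt0 : 0 < x by apply: lt_le_trans x_ge1.
have sqrtx_gt0 : 0 < Num.sqrt x by rewrite sqrtr_gt0.
have ln_le : ln x <= 2 * Num.sqrt x.
  by rewrite -[in ln x](sqr_sqrtr (ltW x_gt0)) lnXn // -[ln _ *+ 2]mulr_natl
     ler_pM2l // ltW // ln_sublinear.
have := ln_ge0 x_ge1; have := sqr_sqrtr (ltW x_gt0); nra.
Qed.

Lemma ler_div_ln_of_sqr (K : realType) n (a D N : K) : 0 <= D -> 0 <= N -> 2 <= a ->
  n.+1%:R * D ^+ 2 <= 8 * N ^+ 2 -> D <= 4 * (a / ln n.+2%:R) * N.
Proof.
move=> D_ge0 N_ge0 a_ge2 D_le; set L := ln _.
have L_gt0 : 0 < L by rewrite ln_gt0 // ltr1n.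
have L2_le : L ^+ 2 <= 8 * n.+1%:R.
  apply: le_trans (ln_sqr_le _) _; first by rewrite ler1n.
  by rewrite -!natr1; have := ler0n K n; lra.
have a_ge0 : 0 <= a by apply: le_trans a_ge2.
rewrite mulrA mulrAC ler_pdivlMr // -ler_sqr ?nnegrE ?mulr_ge0 ?(ltW L_gt0) //.
apply: (@le_trans _ _ (64 * N ^+ 2)); last first.
  have a2_ge : 4 <= a ^+ 2 by nra.
  by rewrite !exprMn ler_wpM2r ?sqr_ge0 //; lra.
rewrite exprMn; apply: le_trans (ler_wpM2l (sqr_ge0 D) L2_le) _.
by rewrite mulrCA -[64]/((8 * 8)%N%:R) natrM -mulrA ler_wpM2l // mulrC.
Qed.

Lemma sqnorm_mx_ge0 m n (A : 'M[R]_(m, n)) : 0 <= sqnorm_mx A.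
Proof. by rewrite sumr_ge0 // => i _; rewrite sumr_ge0 // => j _; rewrite sqr_ge0. Qed.

Lemma sqnorm_mx0 m n : sqnorm_mx (0 : 'M[R]_(m, n)) = 0.
Proof. by rewrite /sqnorm_mx big1 // => i _; rewrite big1 // => j _; rewrite mxE expr0n. Qed.

Lemma sqnorm_row m n (A : 'M[R]_(m, n)) (i : 'I_m) :
  sqnorm_mx (row i A) = \sum_j A i j ^+ 2.
Proof. by rewrite /sqnorm_mx big_ord1; under eq_bigr do rewrite mxE. Qed.

Lemma sqnorm_col m n (A : 'M[R]_(m, n)) (j : 'I_n) :
  sqnorm_mx (col j A) = \sum_i A i j ^+ 2.
Proof. by rewrite /sqnorm_mx; under eq_bigr do rewrite big_ord1 mxE. Qed.

Lemma sum_sqnorm_row m n (A : 'M[R]_(m, n)) :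
  \sum_i sqnorm_mx (row i A) = sqnorm_mx A.
Proof. by under eq_bigr do rewrite sqnorm_row. Qed.

Lemma sum_sqnorm_col m n (A : 'M[R]_(m, n)) :
  \sum_j sqnorm_mx (col j A) = sqnorm_mx A.
Proof. by under eq_bigr do rewrite sqnorm_col; rewrite exchange_big. Qed.

Lemma sqnorm_mx_sub_row_tperm m n (A : 'M[R]_(m, n)) (i j : 'I_m) :
  sqnorm_mx (A - row_perm (tperm i j) A) <=
    4 * (sqnorm_mx (row i A) + sqnorm_mx (row j A)).
Proof.
rewrite /sqnorm_mx exchange_big /= !big_ord1 -big_split big_distrr /=.
apply: ler_sum => l _; rewrite !mxE.
under eq_bigr => k _ do rewrite !mxE.
by rewrite sum_sqr_sub_tperm sqrrB_mulr2n_le.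
Qed.

Lemma sqnorm_mx_sub_col_tperm m n (A : 'M[R]_(m, n)) (i j : 'I_n) :
  sqnorm_mx (A - col_perm (tperm i j) A) <=
    4 * (sqnorm_mx (col i A) + sqnorm_mx (col j A)).
Proof.
rewrite /sqnorm_mx -big_split big_distrr /=.
apply: ler_sum => k _; rewrite !big_ord1 !mxE.
under eq_bigr => l _ do rewrite !mxE.
by rewrite sum_sqr_sub_tperm sqrrB_mulr2n_le.
Qed.

Definition neuron_sqnorm (di dh do : nat) (w : weights di dh do) (k : 'I_dh) : R :=
  let: (W1, b1, W2, _) := w in
  sqnorm_mx (row k W1) + sqnorm_mx (row k b1) + sqnorm_mx (col k W2).

Section Weights.
Variables di dh do : nat.
Implicit Type w : weights di dh do.

Lemma wnorm_ge0 w : 0 <= wnorm w.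
Proof. by case: w => [[[? ?] ?] ?]; apply: sqrtr_ge0. Qed.

Lemma neuron_sqnorm_ge0 w k : 0 <= neuron_sqnorm w k.
Proof. by case: w => [[[W1 b1] W2] ?]; rewrite !addr_ge0 ?sqnorm_mx_ge0. Qed.

Lemma sum_neuron_sqnorm_le w : \sum_k neuron_sqnorm w k <= wnorm w ^+ 2.
Proof.
case: w => [[[W1 b1] W2] b2].
rewrite sqr_sqrtr ?addr_ge0 ?sqnorm_mx_ge0 // ler_wpDr ?sqnorm_mx_ge0 //.
by rewrite !big_split /= sum_sqnorm_row sum_sqnorm_row sum_sqnorm_col.
Qed.

Lemma sqr_wnorm_sub_tperm_le w (i j : 'I_dh) :
  wnorm (wsub w (wact (tperm i j) w)) ^+ 2 <=
    4 * (neuron_sqnorm w i + neuron_sqnorm w j).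
Proof.
case: w => [[[W1 b1] W2] b2].
rewrite /wnorm /wsub /wact /= tr_perm_mx tpermV -!row_permE.
rewrite (_ : W2 *m _ = col_perm (tperm i j) W2); last by rewrite col_permE tpermV.
rewrite subrr sqnorm_mx0 addr0 sqr_sqrtr ?addr_ge0 ?sqnorm_mx_ge0 //.
apply: le_trans (lerD (lerD (sqnorm_mx_sub_row_tperm W1 i j)
  (sqnorm_mx_sub_row_tperm b1 i j)) (sqnorm_mx_sub_col_tperm W2 i j)) _.
by rewrite -!mulrDr [X in _ <= _ * X]addrACA [X in _ <= _ * (X + _)]addrACA.
Qed.

End Weights.

Lemma exists_tperm_wnorm_sub_le di n do (w : weights di n.+2 do) :
  exists i j : 'I_n.+2, i != j /\
    n.+1%:R * wnorm (wsub w (wact (tperm i j) w)) ^+ 2 <= 8 * wnorm w ^+ 2.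
Proof.
have [i [j [nij sum_le]]] := exists_pair_sum_le (neuron_sqnorm_ge0 w).
exists i, j; split => //.
apply: le_trans (ler_wpM2l (ler0n _ n.+1) (sqr_wnorm_sub_tperm_le w i j)) _.
rewrite mulrCA -[8]/((4 * 2)%N%:R) natrM -mulrA ler_wpM2l //.
exact: le_trans sum_le (ler_wpM2l (ler0n _ 2) (sum_neuron_sqnorm_le w)).
Qed.

Lemma tperm_neq1 (T : finType) (x y : T) : x != y -> tperm x y != 1%g.
Proof. by rewrite -odd_tperm; apply: contraTneq => ->; rewrite odd_perm1. Qed.

Theorem theorem3p1 :
  exists C : R, 0 < C /\
    forall (di dh do : nat), (1 <= di)%N -> (1 <= do)%N -> (2 <= dh)%N ->
    forall w : weights di dh do,
    exists tau : 'S_dh, tau != 1%g /\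
      wnorm (wsub w (wact tau w))
        <= C * ((di + do)%:R / ln (dh%:R : R)) * wnorm w.
Proof.
exists 4; split => // di dh d_o di_ge1 do_ge1; case: dh => [|[|n]] // _ w.
have [i [j [nij D_le]]] := exists_tperm_wnorm_sub_le w.
exists (tperm i j); split; first exact: tperm_neq1.
apply: ler_div_ln_of_sqr D_le; rewrite ?wnorm_ge0 //.
by rewrite (ler_nat R 2) (leq_add di_ge1 do_ge1).
Qed.
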